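(* Let $f_{ij}>0$ for $i\neq j\in\{g,p,s\}$, let $v_g,v_s>0$, and assume $v_sF_{gp}>v_gF_{sp}$ (equivalently $V<0$). Consider nonnegative, not identically zero, time-independent solutions $P_g(x),P_p(x),P_s(x)$, $x\in[0,\infty)$, of $$\begin{aligned} 0&=-v_g P_g'-(f_{gs}+f_{gp})P_g+f_{pg}P_p+f_{sg}P_s,\\ 0&=f_{gp}P_g-(f_{pg}+f_{ps})P_p+f_{sp}P_s,\\ 0&=v_s P_s'+f_{gs}P_g+f_{ps}P_p-(f_{sg}+f_{sp})P_s, \end{aligned}$$ with $P_g(x),P_s(x)\to0$ as $x\to\infty$ and $P_g,P_s$ integrable on $[0,\infty)$. Then $P_g$, $P_p$ and $P_s$ are each constant multiples of $e^{-x/\langle L\rangle}$ (in particular $P_s=\frac{v_g}{v_s}P_g$), so the normalized length distribution is exponential with mean $$\langle L\rangle=\frac{v_sv_g}{v_s\frac{F_{gp}}{F_p}-v_g\frac{F_{sp}}{F_p}}=\frac{v_gv_sF_p}{v_sF_{gp}-v_gF_{sp}}.$$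
   Context: $P_i(x,t)$, $i\in\{g,p,s\}$, is the probability density of finding the microtubule at time $t$ in state growth ($g$, growing at velocity $v_g$), pause ($p$) or shrinkage ($s$, shrinking at velocity $v_s$) with length $x$; $f_{ij}$ is the transition rate from state $i$ to state $j$. The system in the claim is the steady state ($\partial_t=0$) of the master equations $\partial_tP_g=-v_g\partial_xP_g-(f_{gs}+f_{gp})P_g+f_{pg}P_p+f_{sg}P_s$, $\partial_tP_p=f_{gp}P_g-(f_{pg}+f_{ps})P_p+f_{sp}P_s$, $\partial_tP_s=v_s\partial_xP_s+f_{gs}P_g+f_{ps}P_p-(f_{sg}+f_{sp})P_s$. Notation: $F_p=f_{pg}+f_{ps}$; $F_{gp}=f_{gs}f_{pg}+f_{gs}f_{ps}+f_{gp}f_{ps}$; $F_{sp}=f_{sg}f_{pg}+f_{sg}f_{ps}+f_{sp}f_{pg}$; $F_{sg}=f_{sp}f_{gs}+f_{sp}f_{gp}+f_{sg}f_{gp}$; $\Omega=F_{sp}+F_{gp}+F_{sg}$; $V=(v_gF_{sp}-v_sF_{gp})/\Omega$. *)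

From Stdlib Require Import Reals.
Open Scope R_scope.

Definition Fp (fpg fps : R) : R := fpg + fps.
Definition Fgp (fgs fgp fpg fps : R) : R := fgs*fpg + fgs*fps + fgp*fps.
Definition Fsp (fsg fsp fpg fps : R) : R := fsg*fpg + fsg*fps + fsp*fpg.

Definition tends_to_0_at_infty (f : R -> R) : Prop :=
  forall eps, 0 < eps -> exists M, forall x, M <= x -> Rabs (f x) < eps.

Definition integrable_0_infty (f : R -> R) : Prop :=
  (forall b, 0 <= b -> inhabited (Riemann_integrable f 0 b)) /\
  exists l, forall eps, 0 < eps -> exists M, forall b (pr : Riemann_integrable f 0 b),
    M <= b -> Rabs (RiemannInt pr - l) < eps.

Definition right_cont_at_0 (f : R -> R) : Prop :=
  limit1_in f (fun x => 0 <= x) (f 0) 0.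

(* Adding the three steady-state equations gives (v_g P_g - v_s P_s)' = 0, so
   the net flux v_g P_g - v_s P_s is constant; as P_g, P_s vanish at infinity it
   is zero.  Substituting P_s = (v_g/v_s) P_g and eliminating P_p with the
   algebraic pause equation turns the growth equation into P_g' = - P_g / L,
   whence P_g, P_p, P_s are multiples of exp (- x / L) on (0, +oo); right
   continuity extends this to x = 0. *)
From Stdlib Require Import Reals Lra.
From Coquelicot Require Import Coquelicot.
Open Scope R_scope.

Lemma derive_0_const_pos (h : R -> R) :
  (forall x, 0 < x -> derivable_pt_lim h x 0) ->
  forall x y, 0 < x -> 0 < y -> h x = h y.
Proof.
  intros dh.
  assert (Hlt : forall a b, 0 < a -> a < b -> h a = h b).
  { intros a b Ha Hab; apply (eq_is_derive h a b); [|lra].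
    intros t Ht; apply is_derive_Reals, dh; lra. }
  intros x y Hx Hy.
  destruct (Rtotal_order x y) as [Hxy|[->|Hxy]]; auto.
  symmetry; auto.
Qed.

Lemma derive_prop_exp (f f' : R -> R) (k : R) :
  (forall x, 0 < x -> derivable_pt_lim f x (f' x)) ->
  (forall x, 0 < x -> f' x = k * f x) ->
  exists c, forall x, 0 < x -> f x = c * exp (k * x).
Proof.
  intros df Hf'.
  set (h := fun y => f y * exp (- k * y)).
  assert (Hh : forall x y, 0 < x -> 0 < y -> h x = h y).
  { apply derive_0_const_pos; intros x Hx; apply is_derive_Reals.
    replace 0 with (f' x * exp (- k * x) + f x * (- k * exp (- k * x)))
      by (rewrite Hf' by exact Hx; ring).
    apply (is_derive_mult f (fun y => exp (- k * y))).
    - apply is_derive_Reals, df, Hx.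
    - auto_derive; auto; ring.
    - intros; apply Rmult_comm. }
  exists (h 1); intros x Hx.
  rewrite <- (Hh x 1 Hx Rlt_0_1); unfold h.
  rewrite Rmult_assoc, <- exp_plus.
  replace (- k * x + k * x) with 0 by ring.
  rewrite exp_0; ring.
Qed.

Lemma tends_to_0_at_infty_is_lim (f : R -> R) :
  tends_to_0_at_infty f -> is_lim f p_infty 0.
Proof.
  intros Hf; apply is_lim_spec; intros eps.
  destruct (Hf eps (cond_pos eps)) as [M HM].
  exists M; intros x Hx; rewrite Rminus_0_r; apply HM; lra.
Qed.

Lemma derive_0_lim_0_pos (h : R -> R) :
  (forall x, 0 < x -> derivable_pt_lim h x 0) -> is_lim h p_infty 0 ->
  forall x, 0 < x -> h x = 0.
Proof.
  intros dh Hl x Hx.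
  assert (Hlx : is_lim h p_infty (h x)).
  { apply (is_lim_ext_loc (fun _ => h x)); [|apply is_lim_const].
    exists 0; intros y Hy; apply derive_0_const_pos; [exact dh | lra | lra]. }
  apply is_lim_unique in Hl; apply is_lim_unique in Hlx.
  rewrite Hl in Hlx; injection Hlx; auto.
Qed.

Lemma right_cont_at_0_agree (f g : R -> R) :
  right_cont_at_0 f -> continuity_pt g 0 ->
  (forall x, 0 < x -> f x = g x) -> f 0 = g 0.
Proof.
  intros Hf Hg Efg.
  apply (single_limit f (fun x => 0 < x) (f 0) (g 0) 0).
  - intros alp Halp; exists (alp / 2); split; [lra|].
    simpl; unfold R_dist; rewrite Rminus_0_r, Rabs_right; lra.
  - apply (limit1_imp f (fun x => 0 <= x)); [intros; lra | exact Hf].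
  - apply (limit1_ext g); [intros; symmetry; auto|].
    apply (limit1_imp g (D_x no_cond 0)); [|exact Hg].
    intros x Hx; split; [exact I | lra].
Qed.

Lemma right_cont_at_0_exp (f : R -> R) (c k : R) :
  right_cont_at_0 f -> (forall x, 0 < x -> f x = c * exp (k * x)) ->
  forall x, 0 <= x -> f x = c * exp (k * x).
Proof.
  intros Hf Hpos x Hx.
  destruct (Rle_lt_or_eq_dec 0 x Hx) as [Hx'|<-]; [auto|].
  apply (right_cont_at_0_agree f (fun y => c * exp (k * y))); auto.
  apply continuity_pt_filterlim, (ex_derive_continuous (fun x => c * exp (k * x))).
  auto_derive; auto.
Qed.

Section MeanLength.

Variables fgs fgp fpg fps fsg fsp vg vs : R.
Hypotheses (Hfpg : 0 < fpg) (Hfps : 0 < fps) (Hvg : 0 < vg) (Hvs : 0 < vs).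
Hypothesis HV : vs * Fgp fgs fgp fpg fps > vg * Fsp fsg fsp fpg fps.

Let L := vg * vs * Fp fpg fps
         / (vs * Fgp fgs fgp fpg fps - vg * Fsp fsg fsp fpg fps).

Lemma mean_length_pos : 0 < L.
Proof.
  unfold L, Fp; apply Rdiv_lt_0_compat; [|lra].
  apply Rmult_lt_0_compat; [apply Rmult_lt_0_compat|]; lra.
Qed.

Lemma mean_length_alt :
  L = vs * vg / (vs * (Fgp fgs fgp fpg fps / Fp fpg fps)
                 - vg * (Fsp fsg fsp fpg fps / Fp fpg fps)).
Proof.
  assert (HFp : Fp fpg fps <> 0) by (unfold Fp; lra).
  replace (vs * (Fgp fgs fgp fpg fps / Fp fpg fps) - vg * (Fsp fsg fsp fpg fps / Fp fpg fps))
    with ((vs * Fgp fgs fgp fpg fps - vg * Fsp fsg fsp fpg fps) / Fp fpg fps)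
    by (field; exact HFp).
  unfold L; field; split; lra.
Qed.

Lemma growth_equation_decay (pg pp ps pg' : R) :
  0 = - vg * pg' - (fgs + fgp) * pg + fpg * pp + fsg * ps ->
  0 = fgp * pg - (fpg + fps) * pp + fsp * ps ->
  vg * pg - vs * ps = 0 ->
  pg' = - / L * pg.
Proof.
  intros Eg Ep Eflux.
  assert (Hden : vs * Fgp fgs fgp fpg fps - vg * Fsp fsg fsp fpg fps <> 0) by lra.
  assert (Hpp : pp = (fgp * pg + fsp * ps) / (fpg + fps))
    by (replace (fgp * pg + fsp * ps) with ((fpg + fps) * pp) by lra; field; lra).
  assert (Hps : ps = vg / vs * pg).
  { apply (Rmult_eq_reg_l vs); [|lra].
    replace (vs * (vg / vs * pg)) with (vg * pg) by (field; lra); lra. }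
  assert (Hpg' : pg' = (- (fgs + fgp) * pg + fpg * pp + fsg * ps) / vg)
    by (replace (- (fgs + fgp) * pg + fpg * pp + fsg * ps) with (vg * pg') by lra;
        field; lra).
  rewrite Hpg', Hpp, Hps; unfold L, Fp, Fgp, Fsp in *.
  field; repeat split; lra.
Qed.

Lemma pause_and_shrink_profiles (pg pp ps cg e : R) :
  pg = cg * e ->
  vg * pg - vs * ps = 0 ->
  0 = fgp * pg - (fpg + fps) * pp + fsp * ps ->
  ps = vg / vs * cg * e /\ pp = (fgp * cg + fsp * (vg / vs * cg)) / (fpg + fps) * e.
Proof.
  intros Hpg Eflux Ep.
  assert (Hps : ps = vg / vs * cg * e).
  { replace ps with (vg * pg / vs) by (replace (vg * pg) with (vs * ps) by lra; field; lra).
    rewrite Hpg; field; lra. }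
  split; [exact Hps|].
  replace pp with ((fgp * pg + fsp * ps) / (fpg + fps))
    by (replace (fgp * pg + fsp * ps) with ((fpg + fps) * pp) by lra; field; lra).
  rewrite Hps, Hpg; field; lra.
Qed.

End MeanLength.

Theorem lemma2
  (fgs fgp fpg fps fsg fsp vg vs : R)
  (Pg Pp Ps Pg' Ps' : R -> R)
  (Hfgs : 0 < fgs) (Hfgp : 0 < fgp) (Hfpg : 0 < fpg) (Hfps : 0 < fps)
  (Hfsg : 0 < fsg) (Hfsp : 0 < fsp) (Hvg : 0 < vg) (Hvs : 0 < vs)
  (HV : vs * Fgp fgs fgp fpg fps > vg * Fsp fsg fsp fpg fps)
  (dPg : forall x, 0 < x -> derivable_pt_lim Pg x (Pg' x))
  (dPs : forall x, 0 < x -> derivable_pt_lim Ps x (Ps' x))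
  (cPg : right_cont_at_0 Pg) (cPp : right_cont_at_0 Pp) (cPs : right_cont_at_0 Ps)
  (Eg : forall x, 0 < x ->
     0 = - vg * Pg' x - (fgs + fgp) * Pg x + fpg * Pp x + fsg * Ps x)
  (Ep : forall x, 0 < x ->
     0 = fgp * Pg x - (fpg + fps) * Pp x + fsp * Ps x)
  (Es : forall x, 0 < x ->
     0 = vs * Ps' x + fgs * Pg x + fps * Pp x - (fsg + fsp) * Ps x)
  (nPg : forall x, 0 <= x -> 0 <= Pg x)
  (nPp : forall x, 0 <= x -> 0 <= Pp x)
  (nPs : forall x, 0 <= x -> 0 <= Ps x)
  (nz : exists x, 0 <= x /\ (Pg x <> 0 \/ Pp x <> 0 \/ Ps x <> 0))
  (lPg : tends_to_0_at_infty Pg) (lPs : tends_to_0_at_infty Ps)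
  (iPg : integrable_0_infty Pg) (iPs : integrable_0_infty Ps) :
  let L := vg * vs * Fp fpg fps
           / (vs * Fgp fgs fgp fpg fps - vg * Fsp fsg fsp fpg fps) in
  L = vs * vg / (vs * (Fgp fgs fgp fpg fps / Fp fpg fps)
                 - vg * (Fsp fsg fsp fpg fps / Fp fpg fps)) /\
  exists cg cp cs : R,
    cs = vg / vs * cg /\
    forall x, 0 <= x ->
      Pg x = cg * exp (- x / L) /\
      Pp x = cp * exp (- x / L) /\
      Ps x = cs * exp (- x / L).
Proof.
  intros L.
  split; [exact (mean_length_alt fgs fgp fpg fps fsg fsp vg vs Hfpg Hfps HV)|].
  assert (HL : 0 < L)
    by exact (mean_length_pos fgs fgp fpg fps fsg fsp vg vs Hfpg Hfps Hvg Hvs HV).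
  assert (Hflux : forall x, 0 < x -> vg * Pg x - vs * Ps x = 0).
  { apply (derive_0_lim_0_pos (fun y => vg * Pg y - vs * Ps y)).
    - intros y Hy; apply is_derive_Reals.
      replace 0 with (vg * Pg' y - vs * Ps' y)
        by (pose proof (Eg y Hy); pose proof (Ep y Hy); pose proof (Es y Hy); lra).
      apply (is_derive_minus (fun y => vg * Pg y) (fun y => vs * Ps y));
        apply is_derive_scal, is_derive_Reals; auto.
    - replace 0 with (vg * 0 - vs * 0) by ring.
      apply is_lim_minus'; apply (is_lim_scal_l _ _ p_infty 0);
        apply tends_to_0_at_infty_is_lim; assumption. }
  destruct (derive_prop_exp Pg Pg' (- / L) dPg) as [cg HPg].
  { intros x Hx; apply growth_equation_decay with (pp := Pp x) (ps := Ps x); auto. }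
  set (cs := vg / vs * cg).
  set (cp := (fgp * cg + fsp * cs) / (fpg + fps)).
  assert (Hprofiles : forall x, 0 < x ->
    Ps x = cs * exp (- / L * x) /\ Pp x = cp * exp (- / L * x)).
  { intros x Hx.
    apply (pause_and_shrink_profiles fgp fpg fps fsp vg vs Hfpg Hfps Hvs (Pg x)); auto. }
  exists cg, cp, cs; split; [reflexivity|].
  intros x Hx.
  replace (- x / L) with (- / L * x) by (field; lra).
  repeat split; apply right_cont_at_0_exp; auto; apply Hprofiles.
Qed.
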